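(* Let $n\ge1$ and let $\lambda=(\lambda_1\ge\cdots\ge\lambda_n\ge0)$ be a partition with at most $n$ parts. Then $$P^{\mathbb L}_{\rho_{n-1}+\lambda}(x_1,\ldots,x_n|\mathbf b)=\Big(\prod_{1\le i<j\le n}(x_i+_Fx_j)\Big)s^{\mathbb L}_\lambda(x_1,\ldots,x_n|\mathbf b),\qquad Q^{\mathbb L}_{\rho_{n}+\lambda}(x_1,\ldots,x_n|\mathbf b)=\Big(\prod_{1\le i\le j\le n}(x_i+_Fx_j)\Big)s^{\mathbb L}_\lambda(x_1,\ldots,x_n|\mathbf b).$$ In particular (taking $\lambda=\emptyset$, $\mathbf b=0$), $P^{\mathbb L}_{\rho_{n-1}}(x_1,\ldots,x_n)=\prod_{i<j}(x_i+_Fx_j)\,s^{\mathbb L}_\emptyset(x_1,\ldots,x_n)$ and $Q^{\mathbb L}_{\rho_n}(x_1,\ldots,x_n)=\prod_{i\le j}(x_i+_Fx_j)\,s^{\mathbb L}_\emptyset(x_1,\ldots,x_n)$.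
   Context: Let $\mathbb L$ be the Lazard ring and $F(u,v)=\sum_{i,j}a_{i,j}u^iv^j$ the universal formal group law; $u+_Fv:=F(u,v)$, and $\bar u$ is the formal inverse ($u+_F\bar u=0$). $\mathbf b=(b_1,b_2,\ldots)$ are indeterminates; $[t|\mathbf b]^k=\prod_{i=1}^k(t+_Fb_i)$, $[[t|\mathbf b]]^{k}=(t+_Ft)[t|\mathbf b]^{k-1}$ for $k\ge1$, and $[t|\mathbf b]^0=[[t|\mathbf b]]^0=1$. For a sequence $\mu=(\mu_1,\dots,\mu_n)$ of nonnegative integers, $[x|\mathbf b]^\mu=\prod_i[x_i|\mathbf b]^{\mu_i}$, $[[x|\mathbf b]]^\mu=\prod_i[[x_i|\mathbf b]]^{\mu_i}$. For a strict partition $\lambda$ of length $r\le n$, $P^{\mathbb L}_\lambda(x_1,\ldots,x_n|\mathbf b)=\frac1{(n-r)!}\sum_{w\in S_n}w\big[[x|\mathbf b]^\lambda\prod_{i=1}^r\prod_{j=i+1}^n\frac{x_i+_Fx_j}{x_i+_F\bar x_j}\big]$ and $Q^{\mathbb L}_\lambda$ is defined identically with $[[x|\mathbf b]]^\lambda$ in place of $[x|\mathbf b]^\lambda$; the superscript-free versions are the specializations $\mathbf b=0$. Let $\rho_n=(n,n-1,\ldots,1)$ and $\rho_{n-1}=(n-1,\ldots,1,0)$ (as an $n$-tuple). For a partition $\lambda$ with at most $n$ parts, $$s^{\mathbb L}_\lambda(x_1,\ldots,x_n|\mathbf b)=\sum_{w\in S_n}w\Big[\frac{[x|\mathbf b]^{\lambda+\rho_{n-1}}}{\prod_{1\le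 i<j\le n}(x_i+_F\bar x_j)}\Big],\qquad s^{\mathbb L}_\lambda(x_1,\dots,x_n)=s^{\mathbb L}_\lambda(x_1,\dots,x_n|0).$$ *)

From mathcomp Require Import all_boot all_order all_algebra all_fingroup.
Set Implicit Arguments. Unset Strict Implicit. Unset Printing Implicit Defensive.
Import GRing.Theory.
Local Open Scope ring_scope.

(* Formal power series over a commutative ring R in countably many          *)
(* variables X_0, X_1, ...  A monomial is a list of exponents m : seq nat   *)
(* (exponent of X_k is  nth 0 m k, trailing zeros irrelevant); a series is   *)
(* its coefficient function.  All operations below read monomials only      *)
(* through nth/sumn, so they are insensitive to trailing zeros.             *)

Definition ps (R : comNzRingType) := seq nat -> R.

Fixpoint below (m : seq nat) : seq (seq nat) :=
  match m with
  | [::] => [:: [::]]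
  | a :: m' => [seq i :: t | i <- iota 0 a.+1, t <- below m']
  end.

Definition msub (m d : seq nat) : seq nat :=
  [seq nth 0 m i - nth 0 d i | i <- iota 0 (size m)]%N.

Section PS.
Variable R : comNzRingType.

Definition ps_const (c : R) : ps R := fun m => if sumn m == 0%N then c else 0.
Definition ps0 : ps R := ps_const 0.
Definition ps1 : ps R := ps_const 1.
Definition ps_var (k : nat) : ps R :=
  fun m => if (sumn m == 1%N) && (nth 0 m k == 1%N) then 1 else 0.
Definition ps_add (f g : ps R) : ps R := fun m => f m + g m.
Definition ps_mul (f g : ps R) : ps R :=
  fun m => \sum_(d <- below m) f d * g (msub m d).
Definition ps_exp (f : ps R) (k : nat) : ps R := iter k (ps_mul f) ps1.

(* composition  g(u) = sum_k c_k u^k  of a one-variable series with       *)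
(* coefficients c by a series u with zero constant term                    *)
Definition ps_comp1 (c : nat -> R) (u : ps R) : ps R :=
  fun m => \sum_(k < (sumn m).+1) c k * ps_exp u k m.

(* F(u,v) = sum_{i,j} a_{ij} u^i v^j, for u, v with zero constant term     *)
Definition fgl_add (a : nat -> nat -> R) (u v : ps R) : ps R :=
  fun m => \sum_(i < (sumn m).+1) \sum_(j < (sumn m).+1)
             a i j * ps_mul (ps_exp u i) (ps_exp v j) m.

Definition ps_eq (f g : ps R) : Prop := forall m, f m = g m.

(* Formal group laws.  a = coefficients of F, c = coefficients of the      *)
(* formal inverse  \bar t = sum_k c_k t^k.                                  *)
Definition is_fgl (a : nat -> nat -> R) : Prop :=
  [/\ forall i, a i 0%N = (i == 1%N)%:R,
      forall j, a 0%N j = (j == 1%N)%:R,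
      forall i j, a i j = a j i &
      ps_eq (fgl_add a (fgl_add a (ps_var 0) (ps_var 1)) (ps_var 2))
            (fgl_add a (ps_var 0) (fgl_add a (ps_var 1) (ps_var 2)))].

Definition is_fgl_inverse (a : nat -> nat -> R) (c : nat -> R) : Prop :=
  c 0%N = 0 /\ ps_eq (fgl_add a (ps_var 0) (ps_comp1 c (ps_var 0))) ps0.

(* Fractions of power series, i.e. elements of the fraction field of the   *)
(* (integral domain, when R is one) power series ring, represented as      *)
(* (numerator, denominator) pairs with the usual operations and equality.  *)
Definition frac := (ps R * ps R)%type.
Definition frac_of (f : ps R) : frac := (f, ps1).
Definition frac0 : frac := (ps0, ps1).
Definition frac_add (p q : frac) : frac :=
  (ps_add (ps_mul p.1 q.2) (ps_mul q.1 p.2), ps_mul p.2 q.2).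
Definition frac_mul (p q : frac) : frac := (ps_mul p.1 q.1, ps_mul p.2 q.2).
Definition frac_eq (p q : frac) : Prop := ps_eq (ps_mul p.1 q.2) (ps_mul q.1 p.2).

(* The objects of the paper, for a FGL a with inverse c, parameters        *)
(* b : nat -> ps R (b j = b_j, j >= 1), and variables y : 'I_n -> ps R.    *)
Variables (a : nat -> nat -> R) (c : nat -> R).

Local Notation "u +F v" := (fgl_add a u v) (at level 50).
Local Notation "\bar u" := (ps_comp1 c u) (at level 10).

Definition fpow (b : nat -> ps R) (t : ps R) (k : nat) : ps R :=
  \big[ps_mul/ps1]_(1 <= i < k.+1) (t +F b i).

Definition fpow2 (b : nat -> ps R) (t : ps R) (k : nat) : ps R :=
  if k is k'.+1 then ps_mul (t +F t) (fpow b t k') else ps1.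

Definition plength (mu : seq nat) : nat := count (fun k => 0 < k)%N mu.

Definition PQ_term (n : nat) (pw : ps R -> nat -> ps R) (mu : seq nat)
    (y : 'I_n -> ps R) : frac :=
  let r := plength mu in
  (ps_mul (\big[ps_mul/ps1]_(i < n) pw (y i) (nth 0%N mu i))
          (\big[ps_mul/ps1]_(i < n | (i < r)%N)
              \big[ps_mul/ps1]_(j < n | (i < j)%N) (y i +F y j)),
   \big[ps_mul/ps1]_(i < n | (i < r)%N)
       \big[ps_mul/ps1]_(j < n | (i < j)%N) (y i +F \bar (y j))).

(* (1/(n-r)!) sum_{w in S_n} w[ ... ]  with w acting by x_i |-> x_{w i};
   x_i is the variable X_(i-1) *)
Definition PQ_L (n : nat) (pw : ps R -> nat -> ps R) (mu : seq nat) : frac :=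
  let s := \big[frac_add/frac0]_(w : 'S_n)
              PQ_term pw mu (fun i => ps_var (w i)) in
  (s.1, ps_mul (ps_const ((n - plength mu)`!)%:R) s.2).

Definition P_L (n : nat) (b : nat -> ps R) (mu : seq nat) : frac :=
  PQ_L n (fpow b) mu.
Definition Q_L (n : nat) (b : nat -> ps R) (mu : seq nat) : frac :=
  PQ_L n (fpow2 b) mu.

(* rho_{n-1} + lambda  and  rho_n + lambda  as n-tuples (lists of length n) *)
Definition rho_plus (k n : nat) (lam : seq nat) : seq nat :=
  [seq (k - i + nth 0 lam i)%N | i <- iota 0 n].

Definition s_term (n : nat) (b : nat -> ps R) (lam : seq nat)
    (y : 'I_n -> ps R) : frac :=
  (\big[ps_mul/ps1]_(i < n) fpow b (y i) (nth 0%N (rho_plus n.-1 n lam) i),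
   \big[ps_mul/ps1]_(i < n) \big[ps_mul/ps1]_(j < n | (i < j)%N)
       (y i +F \bar (y j))).

Definition s_L (n : nat) (b : nat -> ps R) (lam : seq nat) : frac :=
  \big[frac_add/frac0]_(w : 'S_n) s_term b lam (fun i => ps_var (w i)).

Definition prod_lt (n : nat) : ps R :=
  \big[ps_mul/ps1]_(i < n) \big[ps_mul/ps1]_(j < n | (i < j)%N)
     (ps_var i +F ps_var j).
Definition prod_le (n : nat) : ps R :=
  \big[ps_mul/ps1]_(i < n) \big[ps_mul/ps1]_(j < n | (i <= j)%N)
     (ps_var i +F ps_var j).

End PS.

(* the indeterminates b_j (j >= 1) are the variables X_(n+j-1), after the   *)
(* variables x_1..x_n = X_0..X_(n-1) *)
Definition bvars (R : comNzRingType) (n : nat) : nat -> ps R :=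
  fun j => ps_var R (n + j.-1).
Definition bzero (R : comNzRingType) : nat -> ps R := fun _ => ps0 R.

From Pilot Require Import Defs.
From HB Require Import structures.
From mathcomp Require Import all_boot all_order all_algebra all_fingroup zify.
From Stdlib Require Import FunctionalExtensionality.
Set Implicit Arguments. Unset Strict Implicit. Unset Printing Implicit Defensive.
Import GRing.Theory.
Local Open Scope ring_scope.

(* Since rho_{n-1} + lambda has at least n - 1 positive parts, the condition
   i <= r in the definition of P and Q is vacuous and the normalising factor
   1/(n - r)! equals 1.  The summand of P for w is then the summand of s for
   w multiplied by w(prod_{i<j} (x_i +F x_j)), and this product is symmetric
   because F is commutative, so it factors out of the symmetrisation.  For Q,
   [[t|b]]^(k+1) = (t +F t) [t|b]^k turns rho_n + lambda into
   rho_{n-1} + lambda at the cost of the symmetric factor prod_i (x_i +F x_i). *)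

Section PowerSeriesMonoid.
Variable R : comNzRingType.
Implicit Types f g h : ps R.

Definition ps_slice f (i : nat) : ps R := fun t => f (i :: t).

Lemma msub_cons a m i t : msub (a :: m) (i :: t) = (a - i)%N :: msub m t.
Proof.
rewrite /msub /=; congr (_ :: _).
by rewrite -[in LHS](addn0 1%N) iotaDl -map_comp; apply: eq_map.
Qed.

Lemma ps_mul_nil f g : ps_mul f g [::] = f [::] * g [::].
Proof. by rewrite /ps_mul /= big_cons big_nil addr0. Qed.

Lemma ps_mul_cons f g a m :
  ps_mul f g (a :: m) =
  \sum_(0 <= i < a.+1) ps_mul (ps_slice f i) (ps_slice g (a - i)) m.
Proof.
rewrite /ps_mul (_ : below (a :: m) =
  [seq i :: t | i <- iota 0 a.+1, t <- below m]) // big_allpairs_dep /index_iota subn0.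
by apply: eq_bigr => i _; apply: eq_bigr => t _; rewrite msub_cons.
Qed.

Lemma ps_mul_suml (I : Type) (r : seq I) (F : I -> ps R) g m :
  ps_mul (fun t => \sum_(k <- r) F k t) g m = \sum_(k <- r) ps_mul (F k) g m.
Proof. by rewrite /ps_mul exchange_big; apply: eq_bigr => d _; rewrite mulr_suml. Qed.

Lemma ps_mul_sumr (I : Type) (r : seq I) (F : I -> ps R) g m :
  ps_mul g (fun t => \sum_(k <- r) F k t) m = \sum_(k <- r) ps_mul g (F k) m.
Proof. by rewrite /ps_mul exchange_big; apply: eq_bigr => d _; rewrite mulr_sumr. Qed.

Lemma ps_mul_zero f m : ps_mul f (fun _ => 0) m = 0.
Proof. by rewrite /ps_mul big1 // => d _; rewrite mulr0. Qed.

Lemma ps_slice1 j : ps_slice (ps1 R) j = if j == 0%N then ps1 R else fun _ => 0.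
Proof.
by apply: functional_extensionality => t; case: j => [|j] //=; rewrite /ps_slice /ps1 /ps_const /= add0n.
Qed.

Lemma sum_triangle (V : nmodType) a (G : nat -> nat -> V) :
  \sum_(0 <= i < a.+1) \sum_(0 <= k < i.+1) G k (i - k)%N =
  \sum_(0 <= k < a.+1) \sum_(0 <= j < (a - k).+1) G k j.
Proof.
have shift k : (k < a.+1)%N -> \sum_(0 <= j < (a - k).+1) G k j =
    \sum_(0 <= i < a.+1) (if (k <= i)%N then G k (i - k)%N else 0).
  move=> ltka; rewrite [RHS](big_cat_nat (n := k)) //= ?(ltnW ltka) //.
  rewrite [X in _ = X + _]big1_seq ?add0r; last first.
    by move=> i /andP[_]; rewrite mem_index_iota => /andP[_ ltik]; rewrite leqNgt ltik.
  rewrite -[X in \sum_(X <= i < a.+1) _](add0n k) big_addn -subSn //.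
  by rewrite big_nat_cond [RHS]big_nat_cond; apply: eq_bigr => i _; rewrite leq_addl addnK.
rewrite [RHS](eq_big_nat _ _ (fun k hk => shift k (proj2 (andP hk)))).
rewrite exchange_big_nat /=; apply: eq_big_nat => i /andP[_ ltia].
rewrite [RHS](big_cat_nat (n := i.+1)) //= [X in _ = _ + X]big1_seq ?addr0; last first.
  by move=> k /=; rewrite mem_index_iota => /andP[ltik _]; rewrite leqNgt ltik.
rewrite big_nat_cond [RHS]big_nat_cond.
by apply: eq_bigr => k /andP[/andP[_ ltki] _]; rewrite -ltnS ltki.
Qed.

Lemma ps_mulC_coef f g m : ps_mul f g m = ps_mul g f m.
Proof.
elim: m f g => [|a m IHm] f g; first by rewrite !ps_mul_nil mulrC.
rewrite !ps_mul_cons big_nat_rev /=; apply: eq_big_nat => i /andP[_ ltia].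
by rewrite add0n IHm subSS subKn // -ltnS.
Qed.

Lemma ps_mulr1_coef f m : ps_mul f (ps1 R) m = f m.
Proof.
elim: m f => [|a m IHm] f; first by rewrite ps_mul_nil /ps1 /ps_const /= mulr1.
rewrite ps_mul_cons big_nat_recr //= big1_seq ?add0r; last first.
  move=> i /andP[_]; rewrite mem_index_iota => /andP[_ ltia].
  by rewrite ps_slice1 subn_eq0 leqNgt ltia /= ps_mul_zero.
by rewrite subnn ps_slice1 /= IHm.
Qed.

Lemma ps_mulA_coef f g h m : ps_mul (ps_mul f g) h m = ps_mul f (ps_mul g h) m.
Proof.
elim: m f g h => [|a m IHm] f g h; first by rewrite !ps_mul_nil mulrA.
have slice_mul u v i : ps_slice (ps_mul u v) i =
    (fun t => \sum_(0 <= k < i.+1) ps_mul (ps_slice u k) (ps_slice v (i - k)) t).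
  by apply: functional_extensionality => t; rewrite /ps_slice ps_mul_cons.
rewrite !ps_mul_cons.
under eq_bigr do rewrite slice_mul ps_mul_suml.
under [RHS]eq_bigr do rewrite slice_mul ps_mul_sumr.
under eq_bigr do under eq_bigr do rewrite IHm.
rewrite -(sum_triangle a (fun k j =>
  ps_mul (ps_slice f k) (ps_mul (ps_slice g j) (ps_slice h (a - k - j))) m)).
apply: eq_big_nat => i /andP[_ ltia]; apply: eq_big_nat => k /andP[_ ltki].
by rewrite -subnDA subnKC // -ltnS.
Qed.

Lemma ps_mulA : associative (@ps_mul R).
Proof. by move=> f g h; apply: functional_extensionality => m; rewrite ps_mulA_coef. Qed.

Lemma ps_mulC : commutative (@ps_mul R).
Proof. by move=> f g; apply: functional_extensionality => m; apply: ps_mulC_coef. Qed.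

Lemma ps_mul1r : left_id (ps1 R) (@ps_mul R).
Proof.
by move=> f; apply: functional_extensionality => m; rewrite ps_mulC_coef ps_mulr1_coef.
Qed.

End PowerSeriesMonoid.

HB.instance Definition _ (R : comNzRingType) :=
  Monoid.isComLaw.Build (ps R) (ps1 R) (@ps_mul R) (@ps_mulA R) (@ps_mulC R) (@ps_mul1r R).

Section SeriesAndFractions.
Variable R : comNzRingType.
Implicit Types f g h : ps R.

Lemma ps_mulDr f g h : ps_mul f (ps_add g h) = ps_add (ps_mul f g) (ps_mul f h).
Proof.
apply: functional_extensionality => m; rewrite /ps_mul /ps_add -big_split /=.
by apply: eq_bigr => d _; rewrite mulrDr.
Qed.

Lemma ps_mulr0 f : ps_mul f (ps0 R) = ps0 R.
Proof.
apply: functional_extensionality => m.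
have -> : ps0 R = fun _ => 0.
  by apply: functional_extensionality => t; rewrite /ps0 /ps_const; case: ifP.
exact: ps_mul_zero.
Qed.

Lemma fgl_addC (a : nat -> nat -> R) f g :
  (forall i j, a i j = a j i) -> fgl_add a f g = fgl_add a g f.
Proof.
move=> aC; apply: functional_extensionality => m; rewrite /fgl_add exchange_big.
by apply: eq_bigr => i _; apply: eq_bigr => j _; rewrite aC ps_mulC.
Qed.

Lemma big_frac_add_scale (I : Type) (r : seq I) (P : pred I) (F G : I -> Defs.frac R) p :
  (forall i, P i -> F i = (ps_mul p (G i).1, (G i).2)) ->
  \big[@frac_add R/frac0 R]_(i <- r | P i) F i =
  (ps_mul p (\big[@frac_add R/frac0 R]_(i <- r | P i) G i).1,
   (\big[@frac_add R/frac0 R]_(i <- r | P i) G i).2).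
Proof.
move=> FG; apply: (big_ind2 (fun X Y => X = (ps_mul p Y.1, Y.2))) => //.
- by rewrite /frac0 /= ps_mulr0.
- by move=> x1 x2 y1 y2 -> ->; rewrite /frac_add /= ps_mulDr !ps_mulA.
Qed.

End SeriesAndFractions.

Section SymmetricPairProduct.
Variables (R : comNzRingType) (n : nat) (G : 'I_n -> 'I_n -> ps R).
Hypothesis GC : forall i j, G i j = G j i.
Variable w : 'S_n.

(* w permutes the pairs i < j once the images are put back in increasing order. *)
Definition sort_perm_pair (p : 'I_n * 'I_n) : 'I_n * 'I_n :=
  if (w p.1 < w p.2)%N then (w p.1, w p.2) else (w p.2, w p.1).

Let lt_pairs := [set p : 'I_n * 'I_n | (p.1 < p.2)%N].

Lemma sort_perm_pair_inj : {in lt_pairs &, injective sort_perm_pair}.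
Proof.
move=> [i j] [k l]; rewrite !inE /sort_perm_pair /= => ltij ltkl.
have winj := @perm_inj _ w.
case: ifP => _; case: ifP => _ [/winj eq1 /winj eq2]; subst => //.
all: by move: (ltn_trans ltij ltkl); rewrite ltnn.
Qed.

Lemma sort_perm_pair_im : sort_perm_pair @: lt_pairs = lt_pairs.
Proof.
apply/setP => q; apply/idP/idP.
- case/imsetP => [[i j]]; rewrite !inE /sort_perm_pair /= => ltij ->.
  case: ifP => //= wji; rewrite ltn_neqAle leqNgt wji andbT.
  by apply/negP => /eqP/val_inj/perm_inj eqij; move: ltij; rewrite eqij ltnn.
- case: q => [k l]; rewrite inE /= => ltkl; apply/imsetP.
  have wk : w ((w^-1)%g k) = k by rewrite permKV.
  have wl : w ((w^-1)%g l) = l by rewrite permKV.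
  case: (ltngtP ((w^-1)%g k) ((w^-1)%g l)) => cmp.
  + by exists ((w^-1)%g k, (w^-1)%g l); rewrite ?inE // /sort_perm_pair /= wk wl ltkl.
  + exists ((w^-1)%g l, (w^-1)%g k); first by rewrite inE.
    by rewrite /sort_perm_pair /= wk wl ltnNge (ltnW ltkl).
  + by move/val_inj: cmp => eqkl; move: ltkl; rewrite -wk -wl eqkl ltnn.
Qed.

Lemma prod_lt_pairs_perm :
  \big[@ps_mul R/ps1 R]_(i < n) \big[@ps_mul R/ps1 R]_(j < n | (i < j)%N) G (w i) (w j) =
  \big[@ps_mul R/ps1 R]_(i < n) \big[@ps_mul R/ps1 R]_(j < n | (i < j)%N) G i j.
Proof.
have in_lt_pairs : (fun p : 'I_n * 'I_n => true && (p.1 < p.2)%N) =1 (fun p => p \in lt_pairs).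
  by move=> p; rewrite inE.
rewrite !pair_big_dep /= !(eq_bigl _ _ in_lt_pairs).
rewrite -[in RHS]sort_perm_pair_im big_imset /=; last exact: sort_perm_pair_inj.
by apply: eq_bigr => [[i j]] _; rewrite /sort_perm_pair /=; case: ifP => // _; rewrite GC.
Qed.

End SymmetricPairProduct.

Lemma prod_lt_pairs_restrict (R : comNzRingType) n (G : 'I_n -> 'I_n -> ps R) r :
  (n.-1 <= r)%N ->
  \big[@ps_mul R/ps1 R]_(i < n | (i < r)%N) \big[@ps_mul R/ps1 R]_(j < n | (i < j)%N) G i j =
  \big[@ps_mul R/ps1 R]_(i < n) \big[@ps_mul R/ps1 R]_(j < n | (i < j)%N) G i j.
Proof.
move=> ler; rewrite [RHS](bigID (fun i : 'I_n => (i < r)%N)) /=.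
rewrite [X in _ = ps_mul _ X]big1 ?Monoid.mulm1 // => i geir.
by rewrite big1 // => j ltij; move: (ltn_ord j) geir ltij; lia.
Qed.

Lemma nth_rho_plus k n lam i : (i < n)%N ->
  nth 0%N (rho_plus k n lam) i = (k - i + nth 0%N lam i)%N.
Proof. by move=> ltin; rewrite /rho_plus (nth_map 0%N) ?size_iota // nth_iota. Qed.

Lemma count_iota_lt k n : (minn k n <= count (fun i => i < k) (iota 0 n))%N.
Proof.
elim: n => [|n IHn]; first by rewrite minn0.
by rewrite -addn1 iotaD count_cat /= add0n addn0; case: (ltnP n k) => cmp; lia.
Qed.

Lemma plength_rho_plus k n lam : (minn k n <= plength (rho_plus k n lam))%N.
Proof.
rewrite /plength /rho_plus count_map; apply: leq_trans (count_iota_lt k n) _.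
by apply: sub_count => i /=; lia.
Qed.

Lemma fact_sub_plength_rho_plus (R : comNzRingType) k n lam : (n.-1 <= k)%N ->
  ((n - plength (rho_plus k n lam))`!)%:R = 1 :> R.
Proof.
move=> lek; have := plength_rho_plus k n lam => ge_len.
have : (n - plength (rho_plus k n lam) <= 1)%N by lia.
by case: (n - _)%N => [|[|m]].
Qed.

Section RhoPlusFactorisation.
Variables (R : comNzRingType) (a : nat -> nat -> R) (c : nat -> R).
Hypothesis aC : forall i j, a i j = a j i.
Variables (n : nat) (b : nat -> ps R) (lam : seq nat).

Lemma prod_lt_perm (w : 'S_n) :
  \big[@ps_mul R/ps1 R]_(i < n) \big[@ps_mul R/ps1 R]_(j < n | (i < j)%N)
     fgl_add a (ps_var R (w i)) (ps_var R (w j)) = prod_lt a n.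
Proof.
by apply: (@prod_lt_pairs_perm _ _ (fun i j => fgl_add a (ps_var R i) (ps_var R j))) => i j;
  apply: fgl_addC.
Qed.

Lemma prod_diag_perm (w : 'S_n) :
  \big[@ps_mul R/ps1 R]_(i < n) fgl_add a (ps_var R (w i)) (ps_var R (w i)) =
  \big[@ps_mul R/ps1 R]_(i < n) fgl_add a (ps_var R i) (ps_var R i).
Proof. by rewrite [RHS](reindex_inj (@perm_inj _ w)). Qed.

Lemma prod_le_split :
  prod_le a n =
  ps_mul (\big[@ps_mul R/ps1 R]_(i < n) fgl_add a (ps_var R i) (ps_var R i)) (prod_lt a n).
Proof.
rewrite /prod_le /prod_lt -big_split /=; apply: eq_bigr => i _.
rewrite (bigD1 i) //=; congr ps_mul; apply: eq_bigl => j.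
by rewrite ltn_neqAle andbC eq_sym.
Qed.

Lemma fpow2_rho_plus (y : 'I_n -> ps R) :
  \big[@ps_mul R/ps1 R]_(i < n) fpow2 a b (y i) (nth 0%N (rho_plus n n lam) i) =
  ps_mul (\big[@ps_mul R/ps1 R]_(i < n) fgl_add a (y i) (y i))
         (\big[@ps_mul R/ps1 R]_(i < n) fpow a b (y i) (nth 0%N (rho_plus n.-1 n lam) i)).
Proof.
rewrite -big_split /=; apply: eq_bigr => i _; rewrite !nth_rho_plus //.
by rewrite (_ : (n - i + _ = (n.-1 - i + nth 0 lam i).+1)%N) //; move: (ltn_ord i); lia.
Qed.

Lemma P_L_rho_plus :
  frac_eq (P_L a c n b (rho_plus n.-1 n lam))
          (frac_mul (frac_of (prod_lt a n)) (s_L a c n b lam)).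
Proof.
rewrite /P_L /PQ_L /= fact_sub_plength_rho_plus //.
rewrite (@big_frac_add_scale _ _ _ _ _
  (fun w : 'S_n => s_term a c b lam (fun i => ps_var R (w i))) (prod_lt a n)) => [m //|w _].
have ge_len := plength_rho_plus n.-1 n lam.
rewrite /PQ_term /s_term /= !prod_lt_pairs_restrict; try lia.
by rewrite prod_lt_perm ps_mulC.
Qed.

Lemma Q_L_rho_plus :
  frac_eq (Q_L a c n b (rho_plus n n lam))
          (frac_mul (frac_of (prod_le a n)) (s_L a c n b lam)).
Proof.
rewrite /Q_L /PQ_L /= fact_sub_plength_rho_plus ?leq_pred //.
rewrite (@big_frac_add_scale _ _ _ _ _
  (fun w : 'S_n => s_term a c b lam (fun i => ps_var R (w i))) (prod_le a n)) => [m //|w _].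
have ge_len := plength_rho_plus n n lam.
rewrite /PQ_term /s_term /= !prod_lt_pairs_restrict; try lia.
rewrite prod_lt_perm fpow2_rho_plus prod_diag_perm prod_le_split.
by rewrite -!ps_mulA [ps_mul (prod_lt a n) _]ps_mulC.
Qed.

End RhoPlusFactorisation.

Theorem mainTheorem2 (R : idomainType) (HR : [pchar R] =i pred0)
    (a : nat -> nat -> R) (c : nat -> R)
    (Ha : is_fgl a) (Hc : is_fgl_inverse a c)
    (n : nat) (lam : seq nat) :
  (0 < n)%N -> sorted geq lam -> (size lam <= n)%N ->
  [/\ frac_eq (P_L a c n (bvars R n) (rho_plus n.-1 n lam))
              (frac_mul (frac_of (prod_lt a n)) (s_L a c n (bvars R n) lam)),
      frac_eq (Q_L a c n (bvars R n) (rho_plus n n lam))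
              (frac_mul (frac_of (prod_le a n)) (s_L a c n (bvars R n) lam)),
      frac_eq (P_L a c n (bzero R) (rho_plus n.-1 n [::]))
              (frac_mul (frac_of (prod_lt a n)) (s_L a c n (bzero R) [::])) &
      frac_eq (Q_L a c n (bzero R) (rho_plus n n [::]))
              (frac_mul (frac_of (prod_le a n)) (s_L a c n (bzero R) [::]))].
Proof.
move=> _ _ _; have [_ _ aC _] := Ha.
by split; [apply: P_L_rho_plus | apply: Q_L_rho_plus | apply: P_L_rho_plus | apply: Q_L_rho_plus].
Qed.
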